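(* Let $n\ge1$, $m\ge0$ be integers and $a,b>0$. For $s\in[0,a)$ let $I_{m,n,s}(x)=\int_s^x(1+t)^nt^m\,dt$, $\mu_s=\frac{(1+a)^na^mb+nI_{m,n-1,s}(a)}{I_{m,n,s}(a)}$ and $$\tilde\psi_s(x)=\frac{\mu_sI_{m,n,s}(x)-nI_{m,n-1,s}(x)}{(1+x)^nx^m},$$ which is the solution of $\psi'(x)+\psi(x)\big(\frac{n}{1+x}+\frac mx\big)=\mu_s-\frac{n}{1+x}$ with $\psi(s)=0$, $\psi(a)=b$. The following are equivalent: (1) $\mu_s(1+s)\ge n$; (2) $\tilde\psi_s(x)>0$ for all $x\in(s,a]$; (3) $\tilde\psi_s'(x)>0$ for all $x\in(s,a]$. Moreover, $\lim_{x\to s^+}\tilde\psi_s'(x)$ exists and is strictly positive if and only if $\mu_s(1+s)>n$. *)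

From Stdlib Require Import Reals.
From Coquelicot Require Import Coquelicot.
Open Scope R_scope.

Definition Iint (m n : nat) (s x : R) : R :=
  RInt (fun t => (1 + t) ^ n * t ^ m) s x.

Definition mu (n m : nat) (a b s : R) : R :=
  ((1 + a) ^ n * a ^ m * b + INR n * Iint m (n - 1) s a) / Iint m n s a.

Definition psi (n m : nat) (a b s : R) (x : R) : R :=
  (mu n m a b s * Iint m n s x - INR n * Iint m (n - 1) s x)
    / ((1 + x) ^ n * x ^ m).

From Stdlib Require Import Reals Lra Lia.
From Coquelicot Require Import Coquelicot.
Open Scope R_scope.

(* Write psi = N / w with w(x) = (1+x)^n x^m and N = mu I_{m,n} - n I_{m,n-1}, so that
   N(s) = 0 and N'(x) = (1+x)^(n-1) x^m (mu (1+x) - n): near s, and on all of (s,a] when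
   mu (1+s) >= n, psi has the sign of mu (1+s) - n.  The ODE reads
   psi' = (mu - n/(1+x)) - psi * w'/w with w'/w = n/(1+x) + m/x decreasing; this gives
   I_{m,n}(x) w'(x)/w(x) < w(x), and together with N(x) <= (mu - n/(1+x)) I_{m,n}(x) it
   yields psi' > 0 whenever mu (1+s) >= n.  Conversely psi' > 0 forces psi > 0, because
   psi(x) -> 0 as x -> s+.  Finally psi'(x) tends to (mu (1+s) - n)/(1+s) if s > 0, and
   to (mu - n)/(m+1) if s = 0, where psi(x)/x tends to the mean value (mu - n)/(m+1) of
   N'(t)/t^m near 0; either limit has the sign of mu (1+s) - n.
   Of the definition of mu only mu > 0 matters, so the section below takes an arbitrary
   nu > 0 in its place; there n = S k, N = psi_num, w = weight (S k) m and
   w'/w = dlog_weight (S k) m. *)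

Lemma lt_of_is_derive_pos (F dF : R -> R) u v :
  u < v -> (forall c, u <= c <= v -> is_derive F c (dF c)) ->
  (forall c, u < c < v -> 0 < dF c) -> F u < F v.
Proof.
  intros huv hder hpos.
  destruct (MVT_cor2 F dF u v huv) as [c [E hc]].
  - intros c hc. apply is_derive_Reals, hder, hc.
  - assert (0 < dF c * (v - u)) by (apply Rmult_lt_0_compat; [apply hpos |]; lra).
    lra.
Qed.

Lemma le_of_lim_at_right (F : R -> R) s z l :
  s < z -> filterlim F (at_right s) (locally l) ->
  (forall y, s < y < z -> F y <= F z) -> l <= F z.
Proof.
  intros hsz hlim hle.
  destruct (Rle_or_lt l (F z)) as [hlz | hzl]; [exact hlz | exfalso].
  assert (heps : 0 < l - F z) by lra.
  destruct (proj1 (filterlim_locally _ _) hlim (mkposreal _ heps)) as [d hd].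
  assert (0 < Rmin d (z - s)) by (apply Rmin_glb_lt; [apply cond_pos | lra]).
  assert (Rmin d (z - s) <= d) by apply Rmin_l.
  assert (Rmin d (z - s) <= z - s) by apply Rmin_r.
  set (y := s + Rmin d (z - s) / 2).
  assert (hy : ball s d y).
  { change (Rabs (y - s) < d). unfold y. rewrite Rabs_pos_eq; lra. }
  specialize (hd y hy ltac:(unfold y; lra)).
  change (Rabs (F y - l) < l - F z) in hd. apply Rabs_def2 in hd.
  specialize (hle y ltac:(unfold y; lra)). lra.
Qed.

Lemma pos_of_lim0_Derive_pos (F : R -> R) s a :
  filterlim F (at_right s) (locally 0) ->
  (forall x, s < x <= a -> ex_derive F x) ->
  (forall x, s < x <= a -> 0 < Derive F x) ->
  forall x, s < x <= a -> 0 < F x.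
Proof.
  intros hlim hder hpos x hx.
  assert (incr : forall y z, s < y < z -> z <= a -> F y < F z).
  { intros y z hyz hz. apply (lt_of_is_derive_pos F (Derive F)); [lra | |].
    - intros c hc. apply Derive_correct, hder. lra.
    - intros c hc. apply hpos. lra. }
  assert (0 <= F ((s + x) / 2)).
  { apply (le_of_lim_at_right F s); [lra | exact hlim |].
    intros y hy. left. apply incr; lra. }
  assert (F ((s + x) / 2) < F x) by (apply incr; lra).
  lra.
Qed.

Lemma filterlim_Rplus {T} {F : (T -> Prop) -> Prop} {FF : Filter F} (f g : T -> R) a b :
  filterlim f F (locally a) -> filterlim g F (locally b) ->
  filterlim (fun x => f x + g x) F (locally (a + b)).
Proof.
  intros hf hg. eapply filterlim_comp_2; [exact hf | exact hg |].
  apply (filterlim_plus (K := R_AbsRing) (V := R_NormedModule) a b).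
Qed.

Lemma filterlim_Rminus {T} {F : (T -> Prop) -> Prop} {FF : Filter F} (f g : T -> R) a b :
  filterlim f F (locally a) -> filterlim g F (locally b) ->
  filterlim (fun x => f x - g x) F (locally (a - b)).
Proof.
  intros hf hg. apply (filterlim_Rplus f (fun x => - g x) a (- b) hf).
  eapply filterlim_comp; [exact hg |].
  apply (filterlim_opp (K := R_AbsRing) (V := R_NormedModule) b).
Qed.

Lemma filterlim_Rmult {T} {F : (T -> Prop) -> Prop} {FF : Filter F} (f g : T -> R) a b :
  filterlim f F (locally a) -> filterlim g F (locally b) ->
  filterlim (fun x => f x * g x) F (locally (a * b)).
Proof.
  intros hf hg. eapply filterlim_comp_2; [exact hf | exact hg |].
  apply (filterlim_mult (K := R_AbsRing) a b).
Qed.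

Lemma filterlim_at_right_continuous (h : R -> R) s :
  continuous h s -> filterlim h (at_right s) (locally (h s)).
Proof. apply filterlim_filter_le_1, filter_le_within. Qed.

Lemma Rdiv_pos_iff a b : 0 < b -> (0 < a / b <-> 0 < a).
Proof.
  intros hb. split; intros ha.
  - replace a with (a / b * b) by (field; lra). apply Rmult_lt_0_compat; lra.
  - apply Rdiv_lt_0_compat; lra.
Qed.

Lemma RInt_point_R (f : R -> R) a : RInt f a a = 0.
Proof. exact (RInt_point (V := R_CompleteNormedModule) a f). Qed.

Lemma RInt_ext_R (f g : R -> R) a b : (forall t, f t = g t) -> RInt f a b = RInt g a b.
Proof. intros hfg. apply RInt_ext. intros t _. apply hfg. Qed.

Lemma ex_RInt_continuous_R (f : R -> R) a b : (forall t, continuous f t) -> ex_RInt f a b.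
Proof.
  intros hf. apply (ex_RInt_continuous (V := R_CompleteNormedModule)). intros; apply hf.
Qed.

Lemma RInt_lin_comb (f g : R -> R) a b c d :
  ex_RInt f a b -> ex_RInt g a b ->
  RInt (fun t => c * f t - d * g t) a b = c * RInt f a b - d * RInt g a b.
Proof.
  intros hf hg. apply (is_RInt_unique (V := R_CompleteNormedModule)).
  exact (is_RInt_minus _ _ a b _ _ (is_RInt_scal _ a b c _ (RInt_correct _ a b hf))
           (is_RInt_scal _ a b d _ (RInt_correct _ a b hg))).
Qed.

Lemma is_derive_RInt_continuous (f : R -> R) s x :
  (forall t, continuous f t) -> is_derive (RInt f s) x (f x).
Proof.
  intros hf. apply is_derive_RInt with (a := s); [| apply hf].
  apply filter_forall. intros y. apply RInt_correct, ex_RInt_continuous_R, hf.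
Qed.

Lemma continuous_pow m t : continuous (fun t => t ^ m) t.
Proof. apply (ex_derive_continuous (V := R_NormedModule)). auto_derive. auto. Qed.

Lemma RInt_pow m y : RInt (fun t => t ^ m) 0 y = y ^ S m / INR (S m).
Proof.
  assert (hm : INR (S m) <> 0) by (apply not_0_INR; lia).
  apply (is_RInt_unique (V := R_CompleteNormedModule)).
  replace (y ^ S m / INR (S m)) with (minus (y ^ S m / INR (S m)) (0 ^ S m / INR (S m))).
  2:{ rewrite pow_i by lia.
      change (y ^ S m / INR (S m) - 0 / INR (S m) = y ^ S m / INR (S m)). field. exact hm. }
  apply (is_RInt_derive (fun t => t ^ S m / INR (S m))); [| intros; apply continuous_pow].
  intros t _. auto_derive; [auto |].
  change (match m with 0%nat => 1 | S _ => INR m + 1 end) with (INR (S m)).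
  simpl pred. field. exact hm.
Qed.

Lemma RInt_pow_mul_avg (h : R -> R) m :
  (forall t, continuous h t) ->
  filterlim (fun y => RInt (fun t => t ^ m * h t) 0 y / y ^ S m) (at_right 0)
    (locally (h 0 / INR (S m))).
Proof.
  intros hh. apply filterlim_locally. intros eps.
  assert (heps : 0 < eps / 2) by (generalize (cond_pos eps); lra).
  destruct (proj1 (filterlim_locally _ _) (hh 0) (mkposreal _ heps)) as [d hd].
  exists d. intros y hy hy0.
  change (Rabs (y - 0) < d) in hy. rewrite Rminus_0_r, Rabs_pos_eq in hy by lra.
  change (Rabs (RInt (fun t => t ^ m * h t) 0 y / y ^ S m - h 0 / INR (S m)) < eps).
  assert (hm : 0 < INR (S m)) by (apply lt_0_INR; lia).
  assert (hyS : 0 < y ^ S m) by (apply pow_lt; lra).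
  assert (hcont : forall h', (forall t, continuous h' t) ->
                    forall t, continuous (fun t => t ^ m * h' t) t).
  { intros h' hh' t.
    apply (continuous_mult (fun t => t ^ m) h'); [apply continuous_pow | apply hh']. }
  assert (hdev : forall t, continuous (fun t => h t - h 0) t).
  { intros t. apply (continuous_minus h (fun _ => h 0)); [apply hh | apply continuous_const]. }
  assert (E : RInt (fun t => t ^ m * h t) 0 y / y ^ S m - h 0 / INR (S m)
              = RInt (fun t => t ^ m * (h t - h 0)) 0 y / y ^ S m).
  { rewrite (RInt_ext_R (fun t => t ^ m * (h t - h 0))
                        (fun t => 1 * (t ^ m * h t) - h 0 * t ^ m)) by (intros; ring).
    rewrite RInt_lin_comb, RInt_pow; [field; lra | |];
      apply ex_RInt_continuous_R; [apply hcont, hh | apply continuous_pow]. }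
  assert (B : Rabs (RInt (fun t => t ^ m * (h t - h 0)) 0 y)
              <= (y - 0) * (y ^ m * (eps / 2))).
  { apply abs_RInt_le_const; [lra | apply ex_RInt_continuous_R, hcont, hdev |].
    intros t ht. rewrite Rabs_mult. apply Rmult_le_compat; try apply Rabs_pos.
    - rewrite <- RPow_abs. apply pow_incr. split; [apply Rabs_pos |].
      rewrite Rabs_pos_eq; lra.
    - left. apply (hd t). change (Rabs (t - 0) < d). rewrite Rminus_0_r, Rabs_pos_eq; lra. }
  rewrite E, Rabs_div, (Rabs_pos_eq (y ^ S m)) by lra.
  apply Rlt_div_l; [lra |].
  replace ((y - 0) * (y ^ m * (eps / 2))) with (eps / 2 * y ^ S m) in B by (simpl; ring).
  assert (eps / 2 * y ^ S m < eps * y ^ S m) by (apply Rmult_lt_compat_r; lra).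
  lra.
Qed.

Definition weight (j m : nat) (t : R) : R := (1 + t) ^ j * t ^ m.

Definition dlog_weight (j m : nat) (t : R) : R := INR j / (1 + t) + INR m / t.

Lemma weight_S j m t : weight (S j) m t = (1 + t) * weight j m t.
Proof. unfold weight. simpl. ring. Qed.

Lemma weight_pos j m t : 0 < t -> 0 < weight j m t.
Proof. intros ht. unfold weight. apply Rmult_lt_0_compat; apply pow_lt; lra. Qed.

Lemma weight_nonneg j m t : 0 <= t -> 0 <= weight j m t.
Proof. intros ht. unfold weight. apply Rmult_le_pos; apply pow_le; lra. Qed.

Lemma weight_le j m t y : 0 <= t <= y -> weight j m t <= weight j m y.
Proof.
  intros ht. unfold weight.
  apply Rmult_le_compat; try (apply pow_le; lra); apply pow_incr; lra.
Qed.

Lemma ex_derive_weight j m t : ex_derive (weight j m) t.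
Proof. unfold weight. auto_derive. auto. Qed.

Lemma continuous_weight j m t : continuous (weight j m) t.
Proof. apply (ex_derive_continuous (V := R_NormedModule)), ex_derive_weight. Qed.

Lemma ex_RInt_weight j m a b : ex_RInt (weight j m) a b.
Proof. apply ex_RInt_continuous_R, continuous_weight. Qed.

Lemma Derive_weight j m t :
  0 < t -> Derive (weight j m) t = weight j m t * dlog_weight j m t.
Proof.
  intros ht. apply is_derive_unique. unfold weight, dlog_weight.
  auto_derive; [auto |].
  destruct j, m; cbn [pred pow]; rewrite ?S_INR; simpl INR; field; lra.
Qed.

Lemma dlog_weight_pos j m t : (0 < j)%nat -> 0 < t -> 0 < dlog_weight j m t.
Proof.
  intros hj ht. unfold dlog_weight.
  assert (0 < INR j) by (apply lt_0_INR; lia).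
  assert (0 <= INR m) by apply pos_INR.
  assert (0 < INR j / (1 + t)) by (apply Rdiv_lt_0_compat; lra).
  assert (0 <= INR m / t) by (apply Rdiv_le_0_compat; lra).
  lra.
Qed.

Lemma dlog_weight_decr j m t x :
  (0 < j)%nat -> 0 < t < x -> dlog_weight j m x < dlog_weight j m t.
Proof.
  intros hj ht. unfold dlog_weight.
  assert (0 < INR j) by (apply lt_0_INR; lia).
  assert (0 <= INR m) by apply pos_INR.
  assert (INR j / (1 + x) < INR j / (1 + t)).
  { apply Rmult_lt_compat_l; [lra |]. apply Rinv_lt_contravar; nra. }
  assert (INR m / x <= INR m / t).
  { apply Rmult_le_compat_l; [lra |]. apply Rinv_le_contravar; lra. }
  lra.
Qed.

(* [weight - dlog_weight x * RInt weight s] has derivative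
   [weight * (dlog_weight - dlog_weight x) > 0] on (s, x) and starts at [weight s >= 0]. *)
Lemma RInt_weight_mul_dlog_lt j m s x :
  (0 < j)%nat -> 0 <= s < x ->
  RInt (weight j m) s x * dlog_weight j m x < weight j m x.
Proof.
  intros hj hsx.
  set (F := fun y => weight j m y - dlog_weight j m x * RInt (weight j m) s y).
  assert (hF : F s < F x).
  { apply (lt_of_is_derive_pos F
      (fun c => Derive (weight j m) c - dlog_weight j m x * weight j m c)); [lra | |].
    - intros c _. apply (is_derive_minus (weight j m)).
      + apply Derive_correct, ex_derive_weight.
      + apply (is_derive_scal (fun y => RInt (weight j m) s y)).
        apply is_derive_RInt_continuous, continuous_weight.
    - intros c hc. rewrite Derive_weight by lra.
      assert (dlog_weight j m x < dlog_weight j m c)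
        by (apply dlog_weight_decr; [exact hj | lra]).
      assert (0 < weight j m c) by (apply weight_pos; lra).
      nra. }
  unfold F in hF. rewrite RInt_point_R in hF.
  assert (0 <= weight j m s) by (apply weight_nonneg; lra).
  lra.
Qed.

Section Solution.

Variables (k m : nat) (s nu : R).

Definition psi_num (y : R) : R :=
  nu * RInt (weight (S k) m) s y - INR (S k) * RInt (weight k m) s y.

Definition dpsi_num (t : R) : R := weight k m t * (nu * (1 + t) - INR (S k)).

Definition Psi (y : R) : R := psi_num y / weight (S k) m y.

Definition dPsi (y : R) : R :=
  nu - INR (S k) / (1 + y) - Psi y * dlog_weight (S k) m y.

Lemma continuous_dpsi_num t : continuous dpsi_num t.
Proof.
  apply (ex_derive_continuous (V := R_NormedModule)).
  unfold dpsi_num, weight. auto_derive. auto.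
Qed.

Lemma psi_num_RInt y : psi_num y = RInt dpsi_num s y.
Proof.
  unfold psi_num. rewrite <- RInt_lin_comb by apply ex_RInt_weight.
  apply RInt_ext_R. intros t. unfold dpsi_num. rewrite weight_S. ring.
Qed.

Lemma psi_num_at_s : psi_num s = 0.
Proof. unfold psi_num. rewrite !RInt_point_R. ring. Qed.

Lemma is_derive_psi_num y : is_derive psi_num y (dpsi_num y).
Proof.
  apply (is_derive_ext (RInt dpsi_num s)).
  - intros t. symmetry. apply psi_num_RInt.
  - apply is_derive_RInt_continuous, continuous_dpsi_num.
Qed.

Lemma is_derive_Psi y : 0 < y -> is_derive Psi y (dPsi y).
Proof.
  intros hy.
  assert (hw := weight_pos (S k) m y hy).
  assert (hw' := weight_pos k m y hy).
  assert (D := is_derive_div _ _ _ _ _ (is_derive_psi_num y)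
                 (Derive_correct _ _ (ex_derive_weight (S k) m y)) (Rgt_not_eq _ _ hw)).
  rewrite Derive_weight in D by exact hy.
  unfold dPsi, Psi.
  replace (nu - INR (S k) / (1 + y) - psi_num y / weight (S k) m y * dlog_weight (S k) m y)
    with ((dpsi_num y * weight (S k) m y
           - psi_num y * (weight (S k) m y * dlog_weight (S k) m y)) / weight (S k) m y ^ 2).
  - exact D.
  - unfold dpsi_num. rewrite weight_S. field. lra.
Qed.

Lemma Derive_Psi y : 0 < y -> Derive Psi y = dPsi y.
Proof. intros hy. apply is_derive_unique, is_derive_Psi, hy. Qed.

Hypothesis hs : 0 <= s.
Hypothesis hnu : 0 < nu.

Lemma abs_Psi_le y : s < y -> Rabs (Psi y) <= (nu + INR (S k)) * (y - s).
Proof.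
  intros hy.
  assert (hn := pos_INR (S k)).
  assert (hw := weight_pos k m y ltac:(lra)).
  assert (B : Rabs (psi_num y) <= (y - s) * (weight k m y * (nu * (1 + y) + INR (S k)))).
  { rewrite psi_num_RInt.
    apply abs_RInt_le_const; [lra | apply ex_RInt_continuous_R, continuous_dpsi_num |].
    intros t ht. unfold dpsi_num.
    rewrite Rabs_mult, (Rabs_pos_eq (weight k m t)) by (apply weight_nonneg; lra).
    apply Rmult_le_compat; [apply weight_nonneg; lra | apply Rabs_pos | apply weight_le; lra |].
    assert (0 <= nu * (1 + t) <= nu * (1 + y))
      by (split; [apply Rmult_le_pos | apply Rmult_le_compat_l]; lra).
    apply Rabs_le. lra. }
  assert (hw1 : 0 < (1 + y) * weight k m y) by (apply Rmult_lt_0_compat; lra).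
  unfold Psi. rewrite weight_S, Rabs_div, (Rabs_pos_eq ((1 + y) * weight k m y)) by lra.
  apply Rle_div_l; [lra |].
  assert (0 <= (y - s) * weight k m y * INR (S k) * y)
    by (apply Rmult_le_pos; [apply Rmult_le_pos; [apply Rmult_le_pos |] |]; lra).
  assert ((nu + INR (S k)) * (y - s) * ((1 + y) * weight k m y)
          = (y - s) * (weight k m y * (nu * (1 + y) + INR (S k)))
            + (y - s) * weight k m y * INR (S k) * y) by ring.
  lra.
Qed.

Lemma Psi_cvg0 : filterlim Psi (at_right s) (locally 0).
Proof.
  apply filterlim_locally. intros eps.
  assert (hn := pos_INR (S k)).
  assert (hd : 0 < eps / (nu + INR (S k))) by (apply Rdiv_lt_0_compat; [apply cond_pos | lra]).
  exists (mkposreal _ hd). intros y hy hsy.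
  change (Rabs (y - s) < eps / (nu + INR (S k))) in hy. rewrite Rabs_pos_eq in hy by lra.
  change (Rabs (Psi y - 0) < eps). rewrite Rminus_0_r.
  apply (Rle_lt_trans _ _ _ (abs_Psi_le y hsy)).
  rewrite Rmult_comm. apply Rlt_div_r in hy; lra.
Qed.

Lemma Psi_pos x : INR (S k) <= nu * (1 + s) -> s < x -> 0 < Psi x.
Proof.
  intros hc hx.
  assert (hN : psi_num s < psi_num x).
  { apply (lt_of_is_derive_pos psi_num dpsi_num); [lra | intros; apply is_derive_psi_num |].
    intros c hc'. apply Rmult_lt_0_compat; [apply weight_pos; lra |].
    assert (nu * (1 + s) < nu * (1 + c)) by (apply Rmult_lt_compat_l; lra). lra. }
  rewrite psi_num_at_s in hN.
  apply Rdiv_lt_0_compat; [exact hN | apply weight_pos; lra].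
Qed.

Lemma Psi_neg_near x0 : nu * (1 + s) < INR (S k) -> s < x0 ->
  exists x, s < x <= x0 /\ Psi x < 0.
Proof.
  intros hc hx0.
  set (r := INR (S k) / nu - 1).
  assert (hr : nu * (1 + r) = INR (S k)) by (unfold r; field; lra).
  assert (hsr : s < r) by (apply (Rmult_lt_reg_l nu); [exact hnu | nra]).
  set (x := Rmin x0 ((s + r) / 2)).
  assert (x <= x0) by apply Rmin_l.
  assert (x <= (s + r) / 2) by apply Rmin_r.
  assert (s < x) by (apply Rmin_glb_lt; lra).
  exists x. split; [lra |].
  assert (hN : - psi_num s < - psi_num x).
  { apply (lt_of_is_derive_pos (fun y => - psi_num y) (fun c => - dpsi_num c)); [lra | |].
    - intros c _. apply (is_derive_opp psi_num), is_derive_psi_num.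
    - intros c hc'. unfold dpsi_num.
      assert (0 < weight k m c) by (apply weight_pos; lra).
      assert (nu * (1 + c) < nu * (1 + r)) by (apply Rmult_lt_compat_l; lra).
      assert (0 < weight k m c * (INR (S k) - nu * (1 + c)))
        by (apply Rmult_lt_0_compat; lra).
      lra. }
  rewrite psi_num_at_s in hN.
  assert (hw := weight_pos (S k) m x ltac:(lra)).
  unfold Psi. apply Rlt_div_l; lra.
Qed.

Lemma dPsi_pos x : INR (S k) <= nu * (1 + s) -> s < x -> 0 < dPsi x.
Proof.
  intros hc hx.
  set (phi := nu - INR (S k) / (1 + x)).
  assert (hphi : 0 < phi).
  { assert (nu * (1 + s) < nu * (1 + x)) by (apply Rmult_lt_compat_l; lra).
    assert (INR (S k) / (1 + x) < nu) by (apply Rlt_div_l; lra).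
    unfold phi. lra. }
  assert (hN : psi_num x <= phi * RInt (weight (S k) m) s x).
  { rewrite psi_num_RInt.
    replace (phi * RInt (weight (S k) m) s x)
      with (RInt (fun t => phi * weight (S k) m t) s x)
      by exact (RInt_scal (V := R_CompleteNormedModule) _ s x phi (ex_RInt_weight (S k) m s x)).
    apply RInt_le; [lra | apply ex_RInt_continuous_R, continuous_dpsi_num | |].
    - apply (ex_RInt_scal (V := R_CompleteNormedModule)), ex_RInt_weight.
    - intros t ht. unfold dpsi_num. rewrite weight_S.
      assert (0 < weight k m t) by (apply weight_pos; lra).
      assert (INR (S k) / (1 + x) <= INR (S k) / (1 + t)).
      { apply Rmult_le_compat_l; [apply pos_INR | apply Rinv_le_contravar; lra]. }
      assert (E : weight k m t * (nu * (1 + t) - INR (S k))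
                  = (1 + t) * weight k m t * (nu - INR (S k) / (1 + t))) by (field; lra).
      rewrite E, (Rmult_comm phi). apply Rmult_le_compat_l; [nra | unfold phi; lra]. }
  assert (hK := RInt_weight_mul_dlog_lt (S k) m s x ltac:(lia) ltac:(lra)).
  assert (hg := dlog_weight_pos (S k) m x ltac:(lia) ltac:(lra)).
  assert (hw := weight_pos (S k) m x ltac:(lra)).
  assert (psi_num x * dlog_weight (S k) m x < phi * weight (S k) m x).
  { apply (Rle_lt_trans _ (phi * RInt (weight (S k) m) s x * dlog_weight (S k) m x)).
    - apply Rmult_le_compat_r; lra.
    - rewrite Rmult_assoc. apply Rmult_lt_compat_l; lra. }
  unfold dPsi, Psi. fold phi.
  replace (psi_num x / weight (S k) m x * dlog_weight (S k) m x)
    with (psi_num x * dlog_weight (S k) m x / weight (S k) m x) by (field; lra).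
  assert (psi_num x * dlog_weight (S k) m x / weight (S k) m x < phi) by (apply Rlt_div_l; lra).
  lra.
Qed.

Lemma dPsi_cvg_s_pos : 0 < s ->
  filterlim dPsi (at_right s) (locally ((nu * (1 + s) - INR (S k)) / (1 + s))).
Proof.
  intros hs0.
  replace ((nu * (1 + s) - INR (S k)) / (1 + s))
    with (nu - INR (S k) / (1 + s) - 0 * dlog_weight (S k) m s) by (field; lra).
  apply (filterlim_Rminus (fun y => nu - INR (S k) / (1 + y))
           (fun y => Psi y * dlog_weight (S k) m y)).
  - apply (filterlim_at_right_continuous (fun y => nu - INR (S k) / (1 + y))).
    apply (ex_derive_continuous (V := R_NormedModule)). auto_derive. lra.
  - apply filterlim_Rmult; [exact Psi_cvg0 |].
    apply filterlim_at_right_continuous.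
    apply (ex_derive_continuous (V := R_NormedModule)). unfold dlog_weight. auto_derive. lra.
Qed.

Lemma dPsi_cvg_s0 : s = 0 ->
  filterlim dPsi (at_right s) (locally ((nu - INR (S k)) / INR (S m))).
Proof.
  intros hs0.
  set (h := fun t => (1 + t) ^ k * (nu * (1 + t) - INR (S k))).
  assert (hm : 0 < INR (S m)) by (apply lt_0_INR; lia).
  assert (hQ : filterlim (fun y => psi_num y / y ^ S m) (at_right s)
                 (locally (h 0 / INR (S m)))).
  { rewrite hs0. eapply filterlim_ext; [| apply RInt_pow_mul_avg].
    - intros y. simpl. rewrite psi_num_RInt, hs0. f_equal.
      apply RInt_ext_R. intros t. unfold h, dpsi_num, weight. ring.
    - intros t. apply (ex_derive_continuous (V := R_NormedModule)). unfold h. auto_derive. auto. }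
  apply (filterlim_ext_loc
    (fun y => nu - INR (S k) / (1 + y) - Psi y * (INR (S k) / (1 + y))
              - INR m * (psi_num y / y ^ S m * / (1 + y) ^ S k))).
  { unfold at_right, within. apply filter_forall. intros y hy.
    rewrite hs0 in hy. unfold dPsi, Psi, dlog_weight, weight.
    assert (y ^ m <> 0) by (apply pow_nonzero; lra).
    assert ((1 + y) ^ k <> 0) by (apply pow_nonzero; lra).
    cbn [pow]. field. repeat split; auto; lra. }
  replace ((nu - INR (S k)) / INR (S m))
    with (nu - INR (S k) / (1 + s) - 0 * (INR (S k) / (1 + s))
          - INR m * (h 0 / INR (S m) * / (1 + s) ^ S k)).
  2:{ unfold h. rewrite hs0, Rplus_0_r, !pow1, !S_INR. rewrite S_INR in hm. field. lra. }
  apply filterlim_Rminus; [apply filterlim_Rminus |].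
  - apply (filterlim_at_right_continuous (fun y => nu - INR (S k) / (1 + y))).
    apply (ex_derive_continuous (V := R_NormedModule)). auto_derive. lra.
  - apply filterlim_Rmult; [exact Psi_cvg0 |].
    apply (filterlim_at_right_continuous (fun y => INR (S k) / (1 + y))).
    apply (ex_derive_continuous (V := R_NormedModule)). auto_derive. lra.
  - apply filterlim_Rmult; [apply filterlim_const |].
    apply filterlim_Rmult; [exact hQ |].
    apply (filterlim_at_right_continuous (fun y => / (1 + y) ^ S k)).
    apply (ex_derive_continuous (V := R_NormedModule)). auto_derive.
    change ((1 + s) ^ S k <> 0). apply pow_nonzero. lra.
Qed.

Lemma dPsi_cvg_sign : exists l,
  filterlim dPsi (at_right s) (locally l) /\ (0 < l <-> INR (S k) < nu * (1 + s)).
Proof.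
  destruct (Rle_lt_or_eq_dec 0 s hs) as [hs0 | hs0].
  - exists ((nu * (1 + s) - INR (S k)) / (1 + s)).
    split; [exact (dPsi_cvg_s_pos hs0) |].
    rewrite Rdiv_pos_iff by lra. lra.
  - exists ((nu - INR (S k)) / INR (S m)).
    split; [exact (dPsi_cvg_s0 (eq_sym hs0)) |].
    rewrite <- hs0, Rplus_0_r, Rmult_1_r, Rdiv_pos_iff by (apply lt_0_INR; lia). lra.
Qed.

Lemma Psi_pos_iff a : s < a ->
  nu * (1 + s) >= INR (S k) <-> (forall x, s < x <= a -> Psi x > 0).
Proof.
  intros hsa. split.
  - intros hc x hx. apply Psi_pos; lra.
  - intros hpos. apply Rnot_lt_ge. intros hc.
    destruct (Psi_neg_near a hc hsa) as [x [hx hneg]].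
    specialize (hpos x hx). lra.
Qed.

Lemma Derive_Psi_pos_iff a : s < a ->
  nu * (1 + s) >= INR (S k) <-> (forall x, s < x <= a -> Derive Psi x > 0).
Proof.
  intros hsa. split.
  - intros hc x hx. rewrite Derive_Psi by lra. apply dPsi_pos; lra.
  - intros hder. apply (Psi_pos_iff a hsa).
    apply pos_of_lim0_Derive_pos; [exact Psi_cvg0 | | exact hder].
    intros x hx. exists (dPsi x). apply is_derive_Psi. lra.
Qed.

Lemma Derive_Psi_cvg_pos_iff :
  (exists L, filterlim (Derive Psi) (at_right s) (locally L) /\ 0 < L)
  <-> nu * (1 + s) > INR (S k).
Proof.
  destruct dPsi_cvg_sign as [l [hl hsign]].
  assert (hlim : filterlim (Derive Psi) (at_right s) (locally l)).
  { apply (filterlim_ext_loc dPsi); [| exact hl].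
    unfold at_right, within. apply filter_forall. intros y hy.
    symmetry. apply Derive_Psi. lra. }
  split.
  - intros [L [hL hL0]].
    rewrite (filterlim_locally_unique _ L l hL hlim) in hL0. apply hsign in hL0. lra.
  - intros hc. exists l. split; [exact hlim | apply hsign; lra].
Qed.

End Solution.

Lemma psi_eq_Psi k m a b s : psi (S k) m a b s = Psi k m s (mu (S k) m a b s).
Proof. unfold psi, Psi, psi_num, Iint. rewrite Nat.sub_succ, Nat.sub_0_r. reflexivity. Qed.

Lemma mu_pos n m a b s : 0 < a -> 0 < b -> 0 <= s < a -> 0 < mu n m a b s.
Proof.
  intros ha hb hsa. unfold mu, Iint. fold (weight n m) (weight (n - 1) m).
  apply Rdiv_lt_0_compat.
  - assert (0 < (1 + a) ^ n * a ^ m * b) by (apply Rmult_lt_0_compat; [apply weight_pos |]; lra).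
    assert (0 <= RInt (weight (n - 1) m) s a).
    { apply RInt_ge_0; [lra | apply ex_RInt_weight |].
      intros t ht. apply weight_nonneg. lra. }
    assert (0 <= INR n * RInt (weight (n - 1) m) s a)
      by (apply Rmult_le_pos; [apply pos_INR | lra]).
    lra.
  - apply RInt_gt_0; [lra | intros; apply weight_pos; lra | intros; apply continuous_weight].
Qed.

Theorem lemma3p2 (n m : nat) (a b s : R)
  (hn : (1 <= n)%nat) (ha : 0 < a) (hb : 0 < b) (hs0 : 0 <= s) (hsa : s < a) :
  (mu n m a b s * (1 + s) >= INR n <->
     (forall x, s < x <= a -> psi n m a b s x > 0)) /\
  (mu n m a b s * (1 + s) >= INR n <->
     (forall x, s < x <= a -> Derive (psi n m a b s) x > 0)) /\
  ((exists L : R, filterlim (Derive (psi n m a b s)) (at_right s) (locally L) /\ 0 < L)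
     <-> mu n m a b s * (1 + s) > INR n).
Proof.
  destruct n as [| k]; [lia |].
  assert (hnu := mu_pos (S k) m a b s ha hb (conj hs0 hsa)).
  rewrite psi_eq_Psi.
  split; [| split].
  - exact (Psi_pos_iff k m s _ hs0 hnu a hsa).
  - exact (Derive_Psi_pos_iff k m s _ hs0 hnu a hsa).
  - exact (Derive_Psi_cvg_pos_iff k m s _ hs0 hnu).
Qed.
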